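(* Let $n, I, J_0, J_1, \dots, J_I$ be positive integers, let $P \subseteq \mathbb{R}^n$ be a closed convex set, let $c:\mathbb{R}^n \to \mathbb{R}$ and $\phi_{ij}:\mathbb{R}^n\to\mathbb{R}$ ($i=0,\dots,I$, $j=1,\dots,J_i$) be continuous functions, let $A\in\mathbb{R}^{I\times n}$ with rows $A_{i\bullet}$, let $\eta\in\mathbb{R}^I$, and let $\psi_{ij}\in\mathbb{R}$, with $\psi_{ij}^{\pm} = \max(\pm\psi_{ij},0)$. Define $$\theta(x) = c(x) + \sum_{j=1}^{J_0}\psi_{0j}\,\mathbf{1}_{[0,\infty)}(\phi_{0j}(x)),\qquad X_{\rm AHS} = \Big\{x\in P : A_{i\bullet}x + \sum_{j=1}^{J_i}\psi_{ij}\,\mathbf{1}_{[0,\infty)}(\phi_{ij}(x)) \ge \eta_i,\ i=1,\dots,I\Big\},$$ and for $\varepsilon>0$ $$\theta^{\varepsilon}(x) = c(x) + \sum_{j=1}^{J_0}\psi_{0j}^+\,\mathbf{1}_{[0,\infty)}(\phi_{0j}(x)) - \sum_{j=1}^{J_0}\psi_{0j}^-\,\mathbf{1}_{(-\varepsilon,\infty)}(\phi_{0j}(x)),$$ $$X_{\rm AHS}^{\varepsilon} = \Big\{x\in P : A_{i\bullet}x + \sum_{j=1}^{J_i}\psi_{ij}^+\,\mathbf{1}_{[0,\infty)}(\phi_{ij}(x)) - \sum_{j=1}^{J_i}\psi_{ij}^-\,\mathbf{1}_{(-\varepsilon,\infty)}(\phi_{ij}(x)) \ge \eta_i,\ i=1,\dots,I\Big\}.$$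 Suppose that $\sup_{x\in X_{\rm AHS}}\theta(x)$ is finite (in particular $X_{\rm AHS}\neq\emptyset$). Then $$\sup_{x\in X_{\rm AHS}}\theta(x) = \lim_{\varepsilon\downarrow 0}\ \sup_{x\in X^{\varepsilon}_{\rm AHS}}\theta^{\varepsilon}(x) = \sup_{\varepsilon>0}\ \sup_{x\in X^{\varepsilon}_{\rm AHS}}\theta^{\varepsilon}(x).$$ Furthermore, if $\sup_{x\in X_{\rm AHS}}\theta(x)$ is attained at some $x^*\in X_{\rm AHS}$, then there exists $\varepsilon_*>0$ such that $x^*$ is a maximizer of $\theta^{\varepsilon}$ on $X^{\varepsilon}_{\rm AHS}$ for all $\varepsilon\in(0,\varepsilon_*]$.
   Context: $\mathbf{1}_S$ denotes the indicator function of a set $S\subseteq\mathbb{R}$ (equal to $1$ on $S$ and $0$ elsewhere). The supremum over an empty set is $-\infty$. *)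

From HB Require Import structures.
From mathcomp Require Import all_boot all_order all_algebra.
From mathcomp Require Import all_classical all_reals all_analysis.
Set Implicit Arguments. Unset Strict Implicit. Unset Printing Implicit Defensive.
Import Order.TTheory GRing.Theory Num.Theory.
Import numFieldNormedType.Exports.
Local Open Scope classical_set_scope.
Local Open Scope ring_scope.

(* Indices i = 0..I and j = 1..J_i are encoded as nat indices, j shifted to
   0..J_i-1; the constraint rows i = 1..I correspond to row (i-1) : 'I_I of A
   and entry (i-1) of eta. *)

Definition ind0 {R : realType} (t : R) : R := if 0 <= t then 1 else 0.
Definition indeps {R : realType} (eps t : R) : R := if - eps < t then 1 else 0.

Definition ppart {R : realType} (t : R) : R := Num.max t 0.
Definition npart {R : realType} (t : R) : R := Num.max (- t) 0.

Section AHS.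
Variables (R : realType) (n I : nat).
Variables (P : set 'cV[R]_n) (c : 'cV[R]_n -> R) (A : 'M[R]_(I, n))
  (eta : 'cV[R]_I) (J : nat -> nat) (phi : nat -> nat -> 'cV[R]_n -> R)
  (psi : nat -> nat -> R).

Definition theta (x : 'cV[R]_n) : R :=
  c x + \sum_(j < J 0) psi 0 j * ind0 (phi 0 j x).

Definition X_AHS : set 'cV[R]_n :=
  [set x | P x /\ forall i : 'I_I,
     (A *m x) i 0 + \sum_(j < J i.+1) psi i.+1 j * ind0 (phi i.+1 j x)
       >= eta i 0].

Definition theta_eps (eps : R) (x : 'cV[R]_n) : R :=
  c x + \sum_(j < J 0) ppart (psi 0 j) * ind0 (phi 0 j x)
      - \sum_(j < J 0) npart (psi 0 j) * indeps eps (phi 0 j x).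

Definition X_AHS_eps (eps : R) : set 'cV[R]_n :=
  [set x | P x /\ forall i : 'I_I,
     (A *m x) i 0 + \sum_(j < J i.+1) ppart (psi i.+1 j) * ind0 (phi i.+1 j x)
       - \sum_(j < J i.+1) npart (psi i.+1 j) * indeps eps (phi i.+1 j x)
       >= eta i 0].

(* sup over X_AHS of theta, in the extended reals (sup of empty set = -oo) *)
Definition sup_AHS : \bar R := ereal_sup [set (theta x)%:E | x in X_AHS].

Definition sup_AHS_eps (eps : R) : \bar R :=
  ereal_sup [set (theta_eps eps x)%:E | x in X_AHS_eps eps].

End AHS.

From Pilot Require Import Defs.
From HB Require Import structures.
From mathcomp Require Import all_boot all_order all_algebra.
From mathcomp Require Import all_classical all_reals all_analysis.
From mathcomp Require Import lra.
Import Order.TTheory GRing.Theory Num.Theory.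
Import numFieldNormedType.Exports.
Local Open Scope classical_set_scope.
Local Open Scope ring_scope.

(* Since 1_(-eps, oo) >= 1_[0, oo), the relaxed
   objective and constraints are pointwise below the exact ones, so
   X^eps is contained in X and sup^eps <= sup.  Conversely, at a fixed x only
   finitely many values phi_ij(x) occur, so once eps is below |phi_ij(x)| for
   every negative one, the relaxed indicators agree with the exact ones at x:
   x lies in X^eps and theta^eps(x) = theta(x).  Hence every value theta(x),
   x in X, is eventually below sup^eps, which squeezes sup^eps to sup.  The
   argument is pointwise. *)

Lemma near_right0_le (R : realType) (Q : R -> Prop) :
  (\forall e \near 0^'+, Q e) ->
  exists2 es : R, 0 < es & forall e, 0 < e -> e <= es -> Q e.
Proof.
move=> /nbhs_ballP[r /= r0 Qr].
exists (r / 2) => [|e e0 e_le]; first by rewrite divr_gt0.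
apply: Qr => //; rewrite /ball /= sub0r normrN gtr0_norm //.
by rewrite (le_lt_trans e_le) // ltr_pdivrMr // ltr_pMr // ltr1n.
Qed.

Section sup_approximation.
Context {R : realType} {T : Type} {F : set_system T} {FF : ProperFilter F}.
Context {S : set (\bar R)} {D : set T} {f : T -> \bar R}.
Hypotheses (FD : \forall t \near F, D t)
  (f_le_sup : forall t, D t -> (f t <= ereal_sup S)%E)
  (near_ge_f : forall y, S y -> \forall t \near F, (y <= f t)%E).

Lemma ereal_sup_image_approx : ereal_sup (f @` D) = ereal_sup S.
Proof.
apply/eqP; rewrite eq_le; apply/andP; split; apply: ge_ereal_sup.
  by move=> _ [t Dt <-]; exact: f_le_sup.
move=> y Sy; have [t [Dt yt]] := filter_ex (filterI FD (near_ge_f _ Sy)).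
by apply: le_trans yt _; apply: ereal_sup_ubound; exists t.
Qed.

Lemma cvg_ereal_sup_approx : ereal_sup S \is a fin_num -> f @ F --> ereal_sup S.
Proof.
case Es: (ereal_sup S) f_le_sup => [s| |] // f_le_s _.
have near_between e : 0 < e -> \forall t \near F, ((s - e)%:E < f t <= s%:E)%E.
  move=> e0; have [y Sy lt_y] : exists2 y, S y & ((s - e)%:E < y)%E.
    by apply: ereal_sup_gt; rewrite Es lte_fin ltrBlDr ltrDl.
  near=> t; apply/andP; split; last by apply: f_le_s; near: t.
  by apply: lt_le_trans lt_y _; near: t; exact: near_ge_f.
apply/fine_cvgP; split.
  near=> t; have /andP[lt_ft ft_le] : ((s - 1)%:E < f t <= s%:E)%E.
    by near: t; exact: near_between.
  by rewrite fin_numElt (lt_trans _ lt_ft) ?ltNyr // (le_lt_trans ft_le) ?ltry.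
apply/cvgrPdist_lt => e e0; near=> t.
have /andP[] : ((s - e)%:E < f t <= s%:E)%E by near: t; exact: near_between.
rewrite /comp; case: (f t) => [r| |] //=; rewrite lte_fin lee_fin => lt_r r_le.
by rewrite ger0_norm ?subr_ge0 //; lra.
Unshelve. all: by end_near.
Qed.

End sup_approximation.

Section sign_split.
Context {R : realType}.

Lemma ppartBnpart (a : R) : ppart a - npart a = a.
Proof. by rewrite /ppart /npart /Order.max; do 2 case: ifPn; lra. Qed.

Lemma npart_ge0 (a : R) : 0 <= npart a.
Proof. by rewrite /npart le_max lexx orbT. Qed.

Lemma sum_ppartB_npart_eq k (p f g : 'I_k -> R) : g =1 f ->
  \sum_(j < k) ppart (p j) * f j - \sum_(j < k) npart (p j) * g j
  = \sum_(j < k) p j * f j.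
Proof.
move=> gf; rewrite -sumrB; apply: eq_bigr => j _.
by rewrite gf -mulrBl ppartBnpart.
Qed.

Lemma sum_ppartB_npart_le k (p f g : 'I_k -> R) : (forall j, f j <= g j) ->
  \sum_(j < k) ppart (p j) * f j - \sum_(j < k) npart (p j) * g j
  <= \sum_(j < k) p j * f j.
Proof.
move=> f_le_g; rewrite -(@sum_ppartB_npart_eq _ p f f) // lerD2l lerN2.
by apply: ler_sum => j _; rewrite ler_wpM2l ?npart_ge0.
Qed.

Lemma ind0_le_indeps (eps t : R) : 0 < eps -> ind0 t <= indeps eps t.
Proof.
move=> eps0; rewrite /ind0 /indeps; case: ifPn => [t0|_]; last by case: ifP.
by rewrite ifT // (lt_le_trans _ t0) // oppr_lt0.
Qed.

Lemma near_indeps_ind0 (t : R) : \forall eps \near 0^'+, indeps eps t = ind0 t.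
Proof.
rewrite /ind0 /indeps; have [t0|t_lt0] := leP 0 t.
  near=> eps; rewrite ifT // (lt_le_trans _ t0) // oppr_lt0.
  by near: eps; exact: nbhs_right_gt.
near=> eps; rewrite ifF //; apply/negbTE; rewrite -leNgt lerNr.
by near: eps; apply: nbhs_right_le; rewrite oppr_gt0.
Unshelve. all: by end_near.
Qed.

End sign_split.

Section AHS_relaxation.
Context {R : realType} {n I : nat} {J : nat -> nat} {P : set 'cV[R]_n}
  {c : 'cV[R]_n -> R} {phi : nat -> nat -> 'cV[R]_n -> R} {A : 'M[R]_(I, n)}
  {eta : 'cV[R]_I} {psi : nat -> nat -> R}.

Local Notation theta := (theta c J phi psi).
Local Notation theta_eps := (theta_eps c J phi psi).
Local Notation X_AHS := (X_AHS P A eta J phi psi).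
Local Notation X_AHS_eps := (X_AHS_eps P A eta J phi psi).
Local Notation sup_AHS := (sup_AHS P c A eta J phi psi).
Local Notation sup_AHS_eps := (sup_AHS_eps P c A eta J phi psi).

Lemma theta_eps_le eps x : 0 < eps -> theta_eps eps x <= theta x.
Proof.
move=> eps0; rewrite /Defs.theta_eps -addrA lerD2l.
by apply: sum_ppartB_npart_le => j; exact: ind0_le_indeps.
Qed.

Lemma X_AHS_eps_sub eps : 0 < eps -> X_AHS_eps eps `<=` X_AHS.
Proof.
move=> eps0 x [Px Xx]; split=> // i; apply: le_trans (Xx i) _.
rewrite -addrA lerD2l; apply: sum_ppartB_npart_le => j.
exact: ind0_le_indeps.
Qed.

Lemma near_theta_eps x : \forall eps \near 0^'+, theta_eps eps x = theta x.
Proof.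
near=> eps; rewrite /Defs.theta_eps -addrA.
have ind_eq : forall j : 'I_(J 0), indeps eps (phi 0 j x) = ind0 (phi 0 j x).
  by near: eps; apply: filter_forall => j; exact: near_indeps_ind0.
by rewrite sum_ppartB_npart_eq.
Unshelve. all: by end_near.
Qed.

Lemma near_X_AHS_eps x : X_AHS x -> \forall eps \near 0^'+, X_AHS_eps eps x.
Proof.
move=> [Px Xx]; near=> eps.
have ind_eq : forall (i : 'I_I) (j : 'I_(J i.+1)),
    indeps eps (phi i.+1 j x) = ind0 (phi i.+1 j x).
  near: eps; apply: filter_forall => i; apply: filter_forall => j.
  exact: near_indeps_ind0.
by split=> // i; rewrite -addrA sum_ppartB_npart_eq.
Unshelve. all: by end_near.
Qed.

Lemma sup_AHS_eps_le eps : 0 < eps -> (sup_AHS_eps eps <= sup_AHS)%E.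
Proof.
move=> eps0; apply: ge_ereal_sup => _ [x Xx <-].
apply: (@le_trans _ _ (theta x)%:E); first by rewrite lee_fin theta_eps_le.
by apply: ereal_sup_ubound; exists x => //; exact: X_AHS_eps_sub Xx.
Qed.

Lemma near_theta_le_sup_AHS_eps y : [set (theta x)%:E | x in X_AHS] y ->
  \forall eps \near 0^'+, (y <= sup_AHS_eps eps)%E.
Proof.
move=> [x Xx <-]; near=> eps.
have <- : theta_eps eps x = theta x by near: eps; exact: near_theta_eps.
by apply: ereal_sup_ubound; exists x => //; near: eps; exact: near_X_AHS_eps.
Unshelve. all: by end_near.
Qed.

End AHS_relaxation.

Theorem proposition2 (R : realType) (n I : nat) (J : nat -> nat)
  (P : set 'cV[R]_n) (c : 'cV[R]_n -> R)
  (phi : nat -> nat -> 'cV[R]_n -> R) (A : 'M[R]_(I, n)) (eta : 'cV[R]_I)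
  (psi : nat -> nat -> R) :
  (0 < n)%N -> (0 < I)%N -> (forall i, (i <= I)%N -> (0 < J i)%N) ->
  closed P -> convex_set (P : set (convex_lmodType 'cV[R]_n)) ->
  continuous c ->
  (forall i j, (i <= I)%N -> (j < J i)%N -> continuous (phi i j)) ->
  sup_AHS P c A eta J phi psi \is a fin_num ->
  ((fun eps => sup_AHS_eps P c A eta J phi psi eps) x @[x --> 0^'+]
     --> sup_AHS P c A eta J phi psi)
  /\ sup_AHS P c A eta J phi psi =
     ereal_sup [set sup_AHS_eps P c A eta J phi psi eps | eps in `]0, +oo[]
  /\ (forall xs, X_AHS P A eta J phi psi xs ->
        (theta c J phi psi xs)%:E = sup_AHS P c A eta J phi psi ->
        exists2 es : R, 0 < es &
          forall eps, 0 < eps -> eps <= es ->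
            X_AHS_eps P A eta J phi psi eps xs /\
            forall y, X_AHS_eps P A eta J phi psi eps y ->
              theta_eps c J phi psi eps y <= theta_eps c J phi psi eps xs).
Proof.
move=> _ _ _ _ _ _ _ sup_fin.
have near_pos : \forall eps \near (0 : R)^'+, eps \in `]0, +oo[.
  by near=> eps; rewrite in_itv /= andbT; near: eps; exact: nbhs_right_gt.
have sup_eps_le eps : eps \in `]0, +oo[ ->
    (sup_AHS_eps P c A eta J phi psi eps <= sup_AHS P c A eta J phi psi)%E.
  by rewrite in_itv /= andbT; exact: sup_AHS_eps_le.
have near_ge := @near_theta_le_sup_AHS_eps R n I J P c phi A eta psi.
split; last split.
- exact: (cvg_ereal_sup_approx near_pos sup_eps_le near_ge sup_fin).
- by rewrite (ereal_sup_image_approx near_pos sup_eps_le near_ge).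
move=> xs Xxs theta_xs; apply: near_right0_le; near=> eps.
have eps0 : 0 < eps by near: eps; exact: nbhs_right_gt.
split=> [|y Xy]; first by near: eps; exact: near_X_AHS_eps.
have -> : theta_eps c J phi psi eps xs = theta c J phi psi xs.
  by near: eps; exact: near_theta_eps.
apply: le_trans (theta_eps_le _ _ eps0) _.
rewrite -lee_fin theta_xs; apply: ereal_sup_ubound.
by exists y => //; exact: X_AHS_eps_sub Xy.
Unshelve. all: by end_near.
Qed.
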